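(* Let $\mathbb{Z}_{(p_n)}$ be an odometer with scale $(p_n)$. Then $\operatorname{Aut}^{(\infty)}(\mathbb{Z}_{(p_n)},+\mathbf{1})$ is isomorphic to the direct limit of a sequence $$\mathbb{Z}_{(p_n)}\xrightarrow{j_0}\mathbb{Z}_{(p_{n+1}/p_1)}^{p_1}\rtimes\operatorname{Sym}(p_1)\xrightarrow{j_1}\mathbb{Z}_{(p_{n+2}/p_2)}^{p_2}\rtimes\operatorname{Sym}(p_2)\xrightarrow{j_2}\mathbb{Z}_{(p_{n+3}/p_3)}^{p_3}\rtimes\operatorname{Sym}(p_3)\xrightarrow{j_3}\cdots$$ where the maps $j_k$ are injective group homomorphisms.
   Context: A scale is a sequence $(p_n)$ of positive integers with $p_n\mid p_{n+1}$, not eventually constant. The odometer is $\mathbb{Z}_{(p_n)}=\{(x_n)\in\prod_n\mathbb{Z}/p_n\mathbb{Z}: x_{n+1}\equiv x_n\bmod p_n\}$ with translation by $\mathbf{1}=(1,1,\dots)$; $\mathbb{Z}_{(p_{n+k}/p_k)}$ denotes the odometer with scale $(p_{n+k}/p_k)_{n\ge1}$. $\operatorname{Aut}(X,T)$ is the group of homeomorphisms commuting with $T$ and $\operatorname{Aut}^{(\infty)}(X,T)=\bigcup_{n\ge1}\operatorname{Aut}(X,T^n)\subseteq\operatorname{Homeo}(X)$. In $H^{p}\rtimes\operatorname{Sym}(p)$ the symmetric group acts by permuting coordinates. *)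

From mathcomp Require Import all_boot all_order all_fingroup.
From Stdlib Require Import ProofIrrelevance FunctionalExtensionality.

Set Implicit Arguments.
Unset Strict Implicit.
Unset Printing Implicit Defensive.

(* Scales.  The paper's scale (p_n)_{n>=1} is represented 0-indexed:  *)
(*   p : nat -> nat  with  p n = p_{n+1}.                             *)
Definition is_scale (p : nat -> nat) : Prop :=
  [/\ (forall n, 0 < p n),
      (forall n, p n %| p n.+1) &
      ~ (exists N, forall n, N <= n -> p n = p N)].

(* Odometer: Z_(s) = {(x_n) in prod_n Z/s_n : x_{n+1} = x_n mod s_n}, *)
(* elements of Z/s_n represented by residues in [0, s_n).             *)
Definition odo_pred (s : nat -> nat) (x : nat -> nat) : Prop :=
  forall n, x n < s n /\ x n.+1 = x n %[mod s n].

Definition odo (s : nat -> nat) := {x : nat -> nat | odo_pred s x}.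

Lemma odo_pos s (x : odo s) n : 0 < s n.
Proof. by case: x => x hx; case: (hx n) => h _; apply: leq_ltn_trans h. Qed.

Lemma odo_add_proof s (hd : forall n, s n %| s n.+1) (x y : odo s) :
  odo_pred s (fun n => (proj1_sig x n + proj1_sig y n) %% s n).
Proof.
move=> n; split; first by rewrite ltn_pmod // (odo_pos x n).
case: x y => x hx [y hy] /=.
case: (hx n) => _ ex; case: (hy n) => _ ey.
by rewrite modn_mod modn_dvdm // -modnDm ex ey modnDm.
Qed.

Definition odo_add s (hd : forall n, s n %| s n.+1) (x y : odo s) : odo s :=
  exist _ _ (odo_add_proof hd x y).

Lemma odo_succ_proof s (hd : forall n, s n %| s n.+1) (x : odo s) :
  odo_pred s (fun n => (proj1_sig x n + 1) %% s n).
Proof.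
move=> n; split; first by rewrite ltn_pmod // (odo_pos x n).
case: x => x hx /=; case: (hx n) => _ ex.
by rewrite modn_mod modn_dvdm // -modnDml ex modnDml.
Qed.

Definition odo_succ s (hd : forall n, s n %| s n.+1) (x : odo s) : odo s :=
  exist _ _ (odo_succ_proof hd x).

(* Continuity for the (subspace of the) product topology of the      *)
(* discrete spaces Z/s_n : basic neighbourhoods of x are the          *)
(* cylinders {y | y_j = x_j for all j <= m}.                           *)
Definition odo_cont s (f : odo s -> odo s) : Prop :=
  forall (x : odo s) (n : nat), exists m : nat, forall y : odo s,
    (forall j, j <= m -> proj1_sig y j = proj1_sig x j) ->
    proj1_sig (f y) n = proj1_sig (f x) n.

(* Groups, given by their carrier and multiplication (all instances   *)
(* below are the standard groups), homomorphisms, direct limits.      *)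
Record grp := Grp { gcar :> Type; gmul : gcar -> gcar -> gcar }.

Definition ghom (G H : grp) (f : G -> H) : Prop :=
  forall x y, f (gmul x y) = gmul (f x) (f y).

Fixpoint trans (G : nat -> grp) (j : forall k, G k -> G k.+1) (k n : nat)
  : G k -> G (n + k) :=
  match n return G k -> G (n + k) with
  | 0 => fun x => x
  | n'.+1 => fun x => j (n' + k) (@trans G j k n' x)
  end.
Arguments trans {G} j k n x.

(* (L, phi) is a direct limit (colimit) of G_0 -j_0-> G_1 -j_1-> ...   *)
(* i.e. L is the disjoint union of the G_k modulo "eventually equal",  *)
(* with the induced group law: phi is a compatible family of          *)
(* homomorphisms, jointly surjective, identifying exactly the         *)
(* elements which become equal in some later G_n.                     *)
Definition is_direct_limit (G : nat -> grp) (j : forall k, G k -> G k.+1)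
    (L : grp) (phi : forall k, G k -> L) : Prop :=
  [/\ (forall k, ghom (phi k)),
      (forall k x, phi k.+1 (j k x) = phi k x),
      (forall z : L, exists k (x : G k), phi k x = z) &
      (forall k (x y : G k), phi k x = phi k y ->
         exists n, trans j k n x = trans j k n y)].

Definition odo_grp s (hd : forall n, s n %| s n.+1) : grp :=
  Grp (odo_add hd).

(* H^p semidirect Sym(p), Sym(p) acting by permuting coordinates:     *)
(*   (v, sigma) (w, tau) = (v + sigma.w, sigma o tau),                *)
(*   (sigma.w)_i = w_{sigma^{-1} i}.                                  *)
(* Note mathcomp's permutation product is (s * t) x = t (s x), so     *)
(* sigma o tau is (tau * sigma)%g.                                    *)
Definition sdp_mul (H : grp) (p : nat) (a b : ('I_p -> H) * 'S_p)
  : ('I_p -> H) * 'S_p :=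
  (fun i => gmul (a.1 i) (b.1 ((a.2^-1)%g i)), (b.2 * a.2)%g).

Definition sdp (H : grp) (p : nat) : grp := Grp (@sdp_mul H p).

Lemma scale_dvd_le p (hp : is_scale p) i j : i <= j -> p i %| p j.
Proof.
case: hp => _ hd _; elim: j => [|j IH]; first by rewrite leqn0 => /eqP ->.
rewrite leq_eqVlt => /orP [/eqP -> //|]; rewrite ltnS => /IH h.
exact: dvdn_trans h (hd j).
Qed.

(* shifted scale (p_{n+k}/p_k)_{n>=1} for k = k'+1, 0-indexed *)
Definition shift_scale (p : nat -> nat) (k' : nat) : nat -> nat :=
  fun n => p (n + k').+1 %/ p k'.

Lemma shift_scale_dvd p (hp : is_scale p) k' n :
  shift_scale p k' n %| shift_scale p k' n.+1.
Proof.
have [hpos hd _] := hp.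
rewrite /shift_scale.
have h1 : p k' %| p (n + k').+1 by apply: scale_dvd_le => //; rewrite -addSn leq_addl.
have h2 : p k' %| p (n.+1 + k').+1 by apply: scale_dvd_le => //; rewrite -addSn leq_addl.
rewrite -(dvdn_pmul2r (hpos k')) !divnK //.

Qed.

Definition scale_dvd p (hp : is_scale p) : forall n, p n %| p n.+1 :=
  let: And3 _ hd _ := hp in hd.

(* G_0 = Z_(p_n);  G_k = Z_(p_{n+k}/p_k)^{p_k} x| Sym(p_k)  (k >= 1) *)
Definition Gseq (p : nat -> nat) (hp : is_scale p) (k : nat) : grp :=
  match k with
  | 0 => odo_grp (scale_dvd hp)
  | k'.+1 => sdp (odo_grp (shift_scale_dvd hp k')) (p k')
  end.

(* A homeomorphism is stored together with its (unique) inverse.      *)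
Definition is_homeo s (fg : (odo s -> odo s) * (odo s -> odo s)) : Prop :=
  [/\ cancel fg.1 fg.2, cancel fg.2 fg.1, odo_cont fg.1 & odo_cont fg.2].

Definition homeo s := {fg | @is_homeo s fg}.

Definition hfun s (h : homeo s) : odo s -> odo s := (proj1_sig h).1.

Definition in_Aut_inf s (hd : forall n, s n %| s n.+1) (h : homeo s) : Prop :=
  exists n, 0 < n /\
    forall x, hfun h (iter n (odo_succ hd) x) = iter n (odo_succ hd) (hfun h x).

Lemma odo_cont_comp s (f g : odo s -> odo s) :
  odo_cont f -> odo_cont g -> odo_cont (f \o g).
Proof.
move=> cf cg x n /=; have [m hm] := cf (g x) n.
have [M hM] : exists M, forall y : odo s,
    (forall j, j <= M -> proj1_sig y j = proj1_sig x j) ->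
    forall i, i <= m -> proj1_sig (g y) i = proj1_sig (g x) i.
  elim: m {hm} => [|m [M hM]].
    have [M hM] := cg x 0; exists M => y hy i; rewrite leqn0 => /eqP ->; exact: hM.
  have [M' hM'] := cg x m.+1; exists (maxn M M') => y hy i.
  rewrite leq_eqVlt => /orP [/eqP ->|]; last first.
    by rewrite ltnS; apply: hM => jj hj; apply: hy; rewrite leq_max hj.
  by apply: hM' => jj hj; apply: hy; rewrite leq_max hj orbT.
by exists M => y hy; apply: hm; apply: hM.
Qed.

Lemma homeo_mul_proof s (a b : homeo s) :
  is_homeo ((hfun a \o hfun b), ((proj1_sig b).2 \o (proj1_sig a).2)).
Proof.
case: a b => [[f f'] [af1 af2 af3 af4]] [[g g'] [bf1 bf2 bf3 bf4]].
rewrite /hfun /=; split => /=.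
- exact: can_comp.
- exact: can_comp.
- exact: odo_cont_comp.
- exact: odo_cont_comp.
Qed.

Definition homeo_mul s (a b : homeo s) : homeo s :=
  exist _ _ (homeo_mul_proof a b).

Lemma iter_comm (T : Type) (f g : T -> T) :
  (forall x, f (g x) = g (f x)) -> forall n x, f (iter n g x) = iter n g (f x).
Proof. by move=> h; elim=> [//|n IH] x /=; rewrite h IH. Qed.

Lemma aut_inf_mul_proof s (hd : forall n, s n %| s n.+1) (a b : homeo s) :
  in_Aut_inf hd a -> in_Aut_inf hd b -> in_Aut_inf hd (homeo_mul a b).
Proof.
move=> [m [m0 hm]] [n [n0 hn]]; exists (m * n); split; first by rewrite muln_gt0 m0.
have E1 : forall x, iter (m * n) (odo_succ hd) x = iter n (iter m (odo_succ hd)) x.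
  by move=> x; rewrite mulnC iterM.
have E2 : forall x, iter (m * n) (odo_succ hd) x = iter m (iter n (odo_succ hd)) x.
  by move=> x; rewrite iterM.
have ha : forall x, hfun a (iter (m * n) (odo_succ hd) x)
                    = iter (m * n) (odo_succ hd) (hfun a x).
  by move=> x; rewrite !E1 (iter_comm hm).
have hb : forall x, hfun b (iter (m * n) (odo_succ hd) x)
                    = iter (m * n) (odo_succ hd) (hfun b x).
  by move=> x; rewrite !E2 (iter_comm hn).
by move=> x; rewrite /hfun /= -/(hfun b) -/(hfun a) hb ha.
Qed.

Definition aut_inf s (hd : forall n, s n %| s n.+1) := {h : homeo s | in_Aut_inf hd h}.

Definition aut_inf_mul s (hd : forall n, s n %| s n.+1) (a b : aut_inf hd)
  : aut_inf hd :=
  exist _ _ (aut_inf_mul_proof (proj2_sig a) (proj2_sig b)).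

Definition Aut_inf_grp s (hd : forall n, s n %| s n.+1) : grp :=
  Grp (@aut_inf_mul s hd).

(* Fix a level K and write each x in Z_(p) as its digit x_K < p K and its
   tail, a point of the odometer with scale (p (n + K).+1 %/ p K).  Permuting
   digits and translating tails, G_(K+1) acts faithfully on Z_(p) by
   homeomorphisms commuting with T^(p K); conversely every injective map that
   commutes with translation by {z | z_K = 0} = p K * Z_(p) is the action of a
   unique element of G_(K+1).  The action of G_k has this property for level k,
   which yields the embeddings j_k.  A homeomorphism h commuting with T^n
   commutes, by continuity, with translation by the closure of n * Z, and this
   closure contains p K * Z_(p) once gcd(n, p M) no longer grows for M >= K; so
   h lies in the image of some G_k, and Aut^(oo) is the union of these images. *)

From mathcomp Require Import all_boot all_order all_fingroup zify.
From Stdlib Require Import ProofIrrelevance FunctionalExtensionality Classical.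

Set Implicit Arguments.
Unset Strict Implicit.
Unset Printing Implicit Defensive.

Lemma dvdn_chain (s : nat -> nat) :
  (forall n, s n %| s n.+1) -> {homo s : m n / m <= n >-> m %| n}.
Proof. by move=> s_dvd; apply: homo_leq => // n d m; apply: dvdn_trans. Qed.

Lemma iter_commute (T : Type) (f g : T -> T) :
  (forall x, f (g x) = g (f x)) -> forall n x, f (iter n g x) = iter n g (f x).
Proof. by move=> fg; elim=> [//|n IHn] x /=; rewrite fg IHn. Qed.

Lemma nondecreasing_bounded_stable (f : nat -> nat) (B : nat) :
  {homo f : m n / m <= n} -> (forall m, f m <= B) ->
  exists K, forall M, K <= M -> f M = f K.
Proof.
move=> f_homo f_le; apply: NNPP => not_stable.
have grow i : exists K, i <= f K.
  elim: i => [|i [K le_i]]; first by exists 0.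
  have [M /andP [le_KM neq_f]] : exists M, (K <= M) && (f M != f K).
    apply: NNPP => none; apply: not_stable; exists K => M le_KM.
    by apply/eqP/negPn/negP => neq_f; apply: none; exists M; rewrite le_KM.
  by exists M; have := f_homo _ _ le_KM; move: neq_f; rewrite neq_ltn; lia.
by have [K] := grow B.+1; have := f_le K; lia.
Qed.

Lemma exists_muln_modn (n P a : nat) :
  0 < n -> gcdn n P %| a -> exists t, n * t = a %[mod P].
Proof.
move=> n_gt0 /dvdnP [w ->]; case: (egcdnP P n_gt0) => km kn bezout _.
by exists (km * w); rewrite mulnA mulnC (mulnC n) bezout mulnDr mulnA modnMDl mulnC.
Qed.

Section Odometer.
Variables (s : nat -> nat) (s_dvd : forall n, s n %| s n.+1).
Hypothesis s_gt0 : forall n, 0 < s n.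

Local Notation add := (odo_add s_dvd).

Lemma odo_ext (x y : odo s) : sval x =1 sval y -> x = y.
Proof.
case: x y => [x hx] [y hy] /= /functional_extensionality exy; subst y.
by rewrite (proof_irrelevance _ hx hy).
Qed.

Lemma odo_ltn (x : odo s) n : sval x n < s n.
Proof. by case: x => x hx; case: (hx n). Qed.

Lemma odo_modn (x : odo s) m n : m <= n -> sval x n %% s m = sval x m.
Proof.
elim: n => [|n IHn]; first by rewrite leqn0 => /eqP ->; rewrite modn_small ?odo_ltn.
rewrite leq_eqVlt => /orP [/eqP -> | ]; first by rewrite modn_small ?odo_ltn.
rewrite ltnS => le_mn; rewrite -(IHn le_mn) -(modn_dvdm _ (dvdn_chain s_dvd le_mn)).
by case: (proj2_sig x n) => _ ->; rewrite modn_dvdm // (dvdn_chain s_dvd le_mn).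
Qed.

Section Make.
Variables (f : nat -> nat) (f_compat : forall n, f n.+1 = f n %[mod s n]).

Lemma odo_mk_subproof : odo_pred s (fun n => f n %% s n).
Proof. by move=> n; rewrite ltn_pmod // modn_dvdm // f_compat modn_mod. Qed.

Definition odo_mk : odo s := exist _ _ odo_mk_subproof.

Lemma odo_mkE n : sval odo_mk n = f n %% s n.
Proof. by []. Qed.

End Make.

Definition odo_of_nat (a : nat) : odo s := @odo_mk (fun=> a) (fun=> erefl).

Lemma odo_opp_compat (x : odo s) n :
  s n.+1 - sval x n.+1 = s n - sval x n %[mod s n].
Proof.
have [lt_x lt_xS] := (ltnW (odo_ltn x n), ltnW (odo_ltn x n.+1)).
apply/eqP; rewrite -(eqn_modDr (sval x n.+1)) subnK // -modnDmr (odo_modn x (leqnSn n)).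
by rewrite subnK // modnn; apply: s_dvd.
Qed.

Definition odo_opp (x : odo s) : odo s := odo_mk (odo_opp_compat x).

Lemma odo_of_natE a n : sval (odo_of_nat a) n = a %% s n.
Proof. by []. Qed.

Lemma odo_addE (x y : odo s) n : sval (add x y) n = (sval x n + sval y n) %% s n.
Proof. by []. Qed.

Lemma odo_addC (x y : odo s) : add x y = add y x.
Proof. by apply: odo_ext => n; rewrite !odo_addE addnC. Qed.

Lemma odo_addA (x y z : odo s) : add x (add y z) = add (add x y) z.
Proof. by apply: odo_ext => n; rewrite !odo_addE modnDml modnDmr addnA. Qed.

Lemma odo_add0l (x : odo s) : add (odo_of_nat 0) x = x.
Proof.
by apply: odo_ext => n; rewrite odo_addE odo_of_natE mod0n modn_small ?odo_ltn.
Qed.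

Lemma odo_addNl (x : odo s) : add (odo_opp x) x = odo_of_nat 0.
Proof.
apply: odo_ext => n; rewrite odo_addE odo_mkE odo_of_natE mod0n modnDml subnK ?modnn //.
exact: ltnW (odo_ltn x n).
Qed.

Lemma odo_addNr (x : odo s) : add x (odo_opp x) = odo_of_nat 0.
Proof. by rewrite odo_addC odo_addNl. Qed.

Lemma odo_addr0 (x : odo s) : add x (odo_of_nat 0) = x.
Proof. by rewrite odo_addC odo_add0l. Qed.

Lemma odo_addKr (x y : odo s) : add (odo_opp x) (add x y) = y.
Proof. by rewrite odo_addA odo_addNl odo_add0l. Qed.

Lemma odo_addNKr (x y : odo s) : add x (add (odo_opp x) y) = y.
Proof. by rewrite odo_addA odo_addNr odo_add0l. Qed.

Lemma odo_addrI (x : odo s) : injective (add x).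
Proof. by move=> y z /(congr1 (add (odo_opp x))); rewrite !odo_addKr. Qed.

Lemma iter_odo_succ (x : odo s) n :
  iter n (odo_succ s_dvd) x = add x (odo_of_nat n).
Proof.
elim: n => [|n IHn]; apply: odo_ext => m.
  by rewrite odo_addE odo_of_natE mod0n addn0 modn_small ?odo_ltn.
by rewrite /= IHn /= modnDml -addnA -modnDmr modnDml addn1 modnDmr.
Qed.

End Odometer.

Lemma aut_inf_ext s (s_dvd : forall n, s n %| s n.+1) (a b : aut_inf s_dvd) :
  hfun (sval a) =1 hfun (sval b) -> a = b.
Proof.
case: a b => [[[f f'] hf] ha] [[[g g'] hg] hb].
rewrite /hfun /= => /functional_extensionality eq_fg.
subst g; have [f'K _ _ _] := hf; have [_ g'K _ _] := hg.
have eq_f'g' : f' = g'.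
  by apply: functional_extensionality => x; have /= <- := f'K (g' x); have /= -> := g'K x.
subst g'; have eq_hfg := proof_irrelevance _ hf hg; subst hg.
by rewrite (proof_irrelevance _ ha hb).
Qed.

Section Levels.
Variables (p : nat -> nat) (hp : is_scale p).

Local Notation p_dvd := (scale_dvd hp).

Lemma scale_gt0 n : 0 < p n.
Proof. by case: hp. Qed.

Lemma dvdn_scale_shift K n : p K %| p (n + K).+1.
Proof. by apply: scale_dvd_le => //; lia. Qed.

Lemma mul_shift_scale K n : p K * shift_scale p K n = p (n + K).+1.
Proof. by rewrite mulnC divnK ?dvdn_scale_shift. Qed.

Lemma shift_scale_gt0 K n : 0 < shift_scale p K n.
Proof.
by have := scale_gt0 (n + K).+1; rewrite -mul_shift_scale muln_gt0 => /andP [].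
Qed.

Local Notation add := (odo_add p_dvd).
Local Notation nat_odo := (odo_of_nat p_dvd scale_gt0).

Section Level.
Variable K : nat.

Local Notation ZK := (odo (shift_scale p K)).
Local Notation addK := (odo_add (shift_scale_dvd hp K)).
Local Notation zeroK := (odo_of_nat (shift_scale_dvd hp K) (shift_scale_gt0 K) 0).

Definition odo_digit (x : odo p) : 'I_(p K) := Ordinal (odo_ltn x K).

Lemma odo_digitE x : odo_digit x = sval x K :> nat.
Proof. by []. Qed.

Lemma odo_tail_compat (x : odo p) n :
  sval x (n.+1 + K).+1 %/ p K = sval x (n + K).+1 %/ p K %[mod shift_scale p K n].
Proof.
rewrite -[in RHS](odo_modn p_dvd x (leqnSn (n + K).+1)) divn_modl ?dvdn_scale_shift //.
by rewrite modn_mod addSn.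
Qed.

Definition odo_tail (x : odo p) : ZK :=
  odo_mk (shift_scale_dvd hp K) (shift_scale_gt0 K) (odo_tail_compat x).

(* The subtraction is truncated: for m <= K the value p K * y_0 is 0 mod p m. *)
Lemma odo_lift_compat (y : ZK) m :
  p K * sval y (m.+1 - K.+1) = p K * sval y (m - K.+1) %[mod p m].
Proof.
case: (leqP m K) => [le_mK | lt_Km]; first by have -> : m.+1 - K.+1 = m - K.+1 by lia.
have [n ->] : exists n, m = (n + K).+1 by exists (m - K.+1); lia.
have -> : (n + K).+2 - K.+1 = n.+1 by lia.
have -> : (n + K).+1 - K.+1 = n by lia.
rewrite -mul_shift_scale -!muln_modr (odo_modn (shift_scale_dvd hp K) y (leqnSn n)).
by rewrite modn_small ?odo_ltn.
Qed.

Definition odo_lift (y : ZK) : odo p := odo_mk p_dvd scale_gt0 (odo_lift_compat y).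

Definition odo_join (i : 'I_(p K)) (y : ZK) : odo p := add (nat_odo i) (odo_lift y).

Lemma odo_tailE x n : sval (odo_tail x) n = sval x (n + K).+1 %/ p K.
Proof.
by rewrite odo_mkE modn_small // ltn_divLR ?scale_gt0 // mulnC mul_shift_scale odo_ltn.
Qed.

Lemma odo_lift_le y m : m <= K -> sval (odo_lift y) m = 0.
Proof. by move=> le_mK; apply/eqP; apply: dvdn_mulr; apply: scale_dvd_le. Qed.

Lemma odo_liftE y n : sval (odo_lift y) (n + K).+1 = p K * sval y n.
Proof.
rewrite odo_mkE (_ : (n + K).+1 - K.+1 = n); last by lia.
by rewrite modn_small // -mul_shift_scale ltn_pmul2l ?scale_gt0 ?odo_ltn.
Qed.

Lemma odo_tail_lift y : odo_tail (odo_lift y) = y.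
Proof. by apply: odo_ext => n; rewrite odo_tailE odo_liftE mulKn ?scale_gt0. Qed.

Lemma odo_lift_tail x : sval x K = 0 -> odo_lift (odo_tail x) = x.
Proof.
move=> xK0; apply: odo_ext => m; case: (leqP m K) => [le_mK | lt_Km].
  by rewrite odo_lift_le // -(odo_modn p_dvd x le_mK) xK0 mod0n.
have [n ->] : exists n, m = (n + K).+1 by exists (m - K.+1); lia.
rewrite odo_liftE odo_tailE mulnC divnK // /dvdn (odo_modn p_dvd) ?xK0 //; lia.
Qed.

Lemma odo_liftD y y' : odo_lift (addK y y') = add (odo_lift y) (odo_lift y').
Proof.
apply: odo_ext => m; rewrite odo_addE; case: (leqP m K) => [le_mK | lt_Km].
  by rewrite !odo_lift_le ?mod0n.
have [n ->] : exists n, m = (n + K).+1 by exists (m - K.+1); lia.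
by rewrite !odo_liftE odo_addE muln_modr mul_shift_scale mulnDr.
Qed.

Lemma odo_tailD x z : sval z K = 0 ->
  odo_tail (add x z) = addK (odo_tail x) (odo_tail z).
Proof.
move=> zK0; apply: odo_ext => n; rewrite odo_addE !odo_tailE odo_addE.
rewrite divn_modl ?dvdn_scale_shift // divnDr // /dvdn (odo_modn p_dvd) ?zK0 //; lia.
Qed.

Lemma odo_tail_nat (i : 'I_(p K)) : odo_tail (nat_odo i) = zeroK.
Proof.
apply: odo_ext => n; rewrite odo_tailE !odo_of_natE mod0n divn_small // modn_small //.
exact: leq_trans (ltn_ord i) (dvdn_leq (scale_gt0 _) (dvdn_scale_shift K n)).
Qed.

Lemma odo_digitD x z : sval z K = 0 -> odo_digit (add x z) = odo_digit x.
Proof. by move=> zK0; apply: val_inj; rewrite /= zK0 addn0 modn_small ?odo_ltn. Qed.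

Lemma odo_digit_join i y : odo_digit (odo_join i y) = i.
Proof.
apply: val_inj; change (sval (odo_join i y) K = i).
by rewrite odo_addE odo_of_natE odo_lift_le // addn0 modn_mod modn_small.
Qed.

Lemma odo_tail_join i y : odo_tail (odo_join i y) = y.
Proof. by rewrite odo_tailD ?odo_lift_le // odo_tail_nat odo_add0l odo_tail_lift. Qed.

Lemma odo_join_digit_tail x : odo_join (odo_digit x) (odo_tail x) = x.
Proof.
apply: odo_ext => m; rewrite odo_addE odo_of_natE; case: (leqP m K) => [le_mK | lt_Km].
  by rewrite odo_lift_le // addn0 modn_mod (odo_modn p_dvd).
have [n ->] : exists n, m = (n + K).+1 by exists (m - K.+1); lia.
rewrite odo_liftE odo_tailE modnDml odo_digitE.
rewrite -(odo_modn p_dvd x (_ : K <= (n + K).+1)); last by lia.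
by rewrite mulnC addnC -divn_eq modn_small ?odo_ltn.
Qed.

Lemma odo_join_addr i y z : sval z K = 0 ->
  add (odo_join i y) z = odo_join i (addK y (odo_tail z)).
Proof.
by move=> zK0; rewrite -{1}(odo_lift_tail zK0) /odo_join -odo_addA -odo_liftD.
Qed.

Lemma odo_join_lift i y w :
  add (odo_join i y) (odo_lift w) = odo_join i (addK y w).
Proof. by rewrite odo_join_addr ?odo_lift_le // odo_tail_lift. Qed.

Local Notation G := (('I_(p K) -> ZK) * 'S_(p K))%type.

(* The wreath-product action on 'I_(p K) * ZK, transported along
   x = odo_join (odo_digit x) (odo_tail x). *)
Definition sdp_act (g : G) (x : odo p) : odo p :=
  let i := g.2 (odo_digit x) in odo_join i (addK (g.1 i) (odo_tail x)).

Definition sdp_inv (g : G) : G :=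
  (fun i => odo_opp (shift_scale_dvd hp K) (shift_scale_gt0 K) (g.1 (g.2 i)), g.2^-1%g).

Lemma sdp_act_join g i y :
  sdp_act g (odo_join i y) = odo_join (g.2 i) (addK (g.1 (g.2 i)) y).
Proof. by rewrite /sdp_act odo_digit_join odo_tail_join. Qed.

Lemma sdp_actM g h x :
  sdp_act (@sdp_mul (odo_grp (shift_scale_dvd hp K)) (p K) g h) x =
  sdp_act g (sdp_act h x).
Proof.
by rewrite -[x]odo_join_digit_tail !sdp_act_join permM /= permK odo_addA.
Qed.

Lemma sdp_actVK g x : sdp_act (sdp_inv g) (sdp_act g x) = x.
Proof.
by rewrite -[x]odo_join_digit_tail !sdp_act_join /= permK odo_addKr.
Qed.

Lemma sdp_actKV g x : sdp_act g (sdp_act (sdp_inv g) x) = x.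
Proof.
by rewrite -[x]odo_join_digit_tail !sdp_act_join /= permKV odo_addNKr.
Qed.

Lemma sdp_act_addr g x z : sval z K = 0 -> sdp_act g (add x z) = add (sdp_act g x) z.
Proof.
by move=> zK0; rewrite /sdp_act odo_digitD // odo_tailD // odo_addA odo_join_addr.
Qed.

Lemma sdp_act_faithful (g g' : G) : sdp_act g =1 sdp_act g' -> g = g'.
Proof.
case: g g' => [v sigma] [v' sigma'] eq_act.
have eq_sigma : sigma = sigma'.
  apply/permP => i; have := congr1 odo_digit (eq_act (odo_join i zeroK)).
  by rewrite !sdp_act_join !odo_digit_join.
subst sigma'; congr pair; apply: functional_extensionality => j.
have := congr1 odo_tail (eq_act (odo_join (sigma^-1%g j) zeroK)).
by rewrite !sdp_act_join !odo_tail_join /= permKV !odo_addr0.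
Qed.

Lemma sdp_act_cont g : odo_cont (sdp_act g).
Proof.
move=> x n; exists (maxn n K) => y eq_yx.
have eq_digit : odo_digit y = odo_digit x.
  by apply: val_inj; apply: eq_yx; rewrite leq_maxr.
rewrite /sdp_act eq_digit !odo_addE; congr (_ %% _); congr (_ + _).
case: (leqP n K) => [le_nK | lt_Kn]; first by rewrite !odo_lift_le.
have [m def_n] : exists m, n = (m + K).+1 by exists (n - K.+1); lia.
by rewrite def_n !odo_liftE !odo_addE !odo_tailE eq_yx // -def_n leq_maxl.
Qed.

(* Such an h is determined by the points h (odo_join i 0): their digits give
   the permutation and their tails the translation vector. *)
Section Decode.
Variables (h : odo p -> odo p) (h_inj : injective h).
Hypothesis h_addr : forall x z, sval z K = 0 -> h (add x z) = add (h x) z.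

Definition decode_digit (i : 'I_(p K)) : 'I_(p K) :=
  odo_digit (h (odo_join i zeroK)).

Lemma decode_join i y :
  h (odo_join i y) = odo_join (decode_digit i) (addK (odo_tail (h (odo_join i zeroK))) y).
Proof.
rewrite -odo_join_lift /decode_digit odo_join_digit_tail -h_addr; last exact: odo_lift_le.
by rewrite odo_join_lift odo_add0l.
Qed.

Lemma decode_digit_inj : injective decode_digit.
Proof.
move=> i j eq_ij.
pose w := addK (odo_opp (shift_scale_dvd hp K) (shift_scale_gt0 K)
                  (odo_tail (h (odo_join i zeroK)))) (odo_tail (h (odo_join j zeroK))).
have : h (odo_join i w) = h (odo_join j zeroK).
  by rewrite decode_join [RHS]decode_join eq_ij odo_addNKr odo_addr0.
by move/h_inj/(congr1 odo_digit); rewrite !odo_digit_join.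
Qed.

Definition decode : G :=
  let sigma := perm decode_digit_inj in
  (fun i => odo_tail (h (odo_join (sigma^-1%g i) zeroK)), sigma).

Lemma sdp_act_decode : sdp_act decode =1 h.
Proof.
move=> x; rewrite -[x]odo_join_digit_tail sdp_act_join decode_join /=.
by rewrite permK permE.
Qed.

End Decode.

End Level.

Lemma gcdn_scale_stable n :
  0 < n -> exists K, forall M, K <= M -> gcdn n (p M) %| p K.
Proof.
move=> n_gt0.
have [K stable] : exists K, forall M, K <= M -> gcdn n (p M) = gcdn n (p K).
  apply: (@nondecreasing_bounded_stable _ n) => [m M le_mM | m].
    apply: dvdn_leq; first by rewrite gcdn_gt0 n_gt0.
    by rewrite dvdn_gcd dvdn_gcdl (dvdn_trans (dvdn_gcdr _ _) (scale_dvd_le hp le_mM)).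
  by apply: dvdn_leq; rewrite ?dvdn_gcdl.
by exists K => M le_KM; rewrite stable // dvdn_gcdr.
Qed.

(* h commutes with adding n * t, and n * t can be chosen to agree with z on
   any prescribed initial coordinates, because gcd(n, p M) divides z_M. *)
Lemma aut_inf_addr (h : aut_inf p_dvd) : exists K, forall x z,
  sval z K = 0 -> hfun (sval h) (add x z) = add (hfun (sval h) x) z.
Proof.
case: h => [[[f f'] f_homeo] [n [n_gt0 f_comm]]]; have [_ _ f_cont _] := f_homeo.
rewrite /hfun /= in f_comm *.
have [K gcd_dvd] := gcdn_scale_stable n_gt0.
exists K => x z zK0; apply: odo_ext => N.
have [M f_loc] := f_cont (add x z) N.
pose M' := maxn (maxn M N) K.
have [le_MM' le_NM' le_KM'] : [/\ M <= M', N <= M' & K <= M'] by split; lia.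
have [t nt_z] : exists t, n * t = sval z M' %[mod p M'].
  apply: exists_muln_modn n_gt0 _; apply: dvdn_trans (gcd_dvd M' le_KM') _.
  by rewrite /dvdn (odo_modn p_dvd) ?zK0.
have nt_approx j : j <= M' -> sval (nat_odo (n * t)) j = sval z j.
  move=> le_jM; have dvd_jM := scale_dvd_le hp le_jM.
  by rewrite odo_of_natE -(modn_dvdm (n * t) dvd_jM) nt_z modn_dvdm // (odo_modn p_dvd).
have f_shift : f (add x (nat_odo (n * t))) = add (f x) (nat_odo (n * t)).
  by rewrite -!iter_odo_succ mulnC !iterM (iter_commute f_comm).
rewrite -[LHS](f_loc (add x (nat_odo (n * t)))) => [|j le_jM].
  by rewrite /= f_shift !odo_addE nt_approx.
by rewrite !odo_addE nt_approx // (leq_trans le_jM).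
Qed.

Definition gseq_act k : Gseq hp k -> odo p -> odo p :=
  match k return Gseq hp k -> odo p -> odo p with
  | 0 => add
  | K.+1 => @sdp_act K
  end.

Lemma gseq_actM k (a b : Gseq hp k) x :
  gseq_act (gmul a b) x = gseq_act a (gseq_act b x).
Proof.
case: k a b => [|K] a b; last exact: sdp_actM.
by change (add (add a b) x = add a (add b x)); rewrite odo_addA.
Qed.

Lemma gseq_act_inj k (g : Gseq hp k) : injective (gseq_act g).
Proof.
case: k g => [|K] g; last exact: can_inj (sdp_actVK g).
exact: (odo_addrI scale_gt0).
Qed.

Lemma gseq_act_faithful k (a b : Gseq hp k) : gseq_act a =1 gseq_act b -> a = b.
Proof.
case: k a b => [|K] a b eq_ab; last exact: sdp_act_faithful.
by have := eq_ab (nat_odo 0); rewrite /= !odo_addr0.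
Qed.

Lemma gseq_act_addr k (g : Gseq hp k) x z :
  sval z k = 0 -> gseq_act g (add x z) = add (gseq_act g x) z.
Proof.
case: k g => [|K] g zk0; first by rewrite /= odo_addA.
by apply: sdp_act_addr; rewrite -(odo_modn p_dvd z (leqnSn K)) zk0 mod0n.
Qed.

Definition gseq_j k (g : Gseq hp k) : Gseq hp k.+1 :=
  decode (@gseq_act_inj k g) (@gseq_act_addr k g).

Lemma gseq_act_j k (g : Gseq hp k) : gseq_act (gseq_j g) =1 gseq_act g.
Proof. exact: sdp_act_decode. Qed.

Lemma sdp_act_homeo K (g : Gseq hp K.+1) :
  is_homeo (sdp_act g, sdp_act (sdp_inv g)).
Proof. by split; [exact: sdp_actVK | exact: sdp_actKV | exact: sdp_act_cont ..]. Qed.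

Lemma sdp_act_aut K (g : Gseq hp K.+1) :
  in_Aut_inf p_dvd (exist _ _ (sdp_act_homeo g)).
Proof.
exists (p K); split => [|x]; first exact: scale_gt0.
by rewrite /hfun /= !(iter_odo_succ p_dvd scale_gt0) sdp_act_addr // odo_of_natE modnn.
Qed.

(* Going through j_k spares G_0 (acting by translations) a separate proof. *)
Definition gseq_aut k (g : Gseq hp k) : aut_inf p_dvd :=
  exist _ _ (sdp_act_aut (gseq_j g)).

Lemma hfun_gseq_aut k (g : Gseq hp k) : hfun (sval (gseq_aut g)) =1 gseq_act g.
Proof. exact: gseq_act_j. Qed.

End Levels.

Theorem theorem3p5 (p : nat -> nat) (hp : is_scale p) :
  exists j : forall k, Gseq hp k -> Gseq hp k.+1,
    (forall k, ghom (j k) /\ injective (j k)) /\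
    exists phi : forall k, Gseq hp k -> Aut_inf_grp (scale_dvd hp),
      is_direct_limit j phi.
Proof.
exists (@gseq_j p hp); split.
  move=> k; split => [a b | a b eq_ab]; apply: gseq_act_faithful => x.
    by rewrite gseq_actM !gseq_act_j gseq_actM.
  by rewrite -gseq_act_j eq_ab gseq_act_j.
exists (@gseq_aut p hp); split.
- move=> k a b; apply: aut_inf_ext => x.
  by rewrite hfun_gseq_aut gseq_actM -!hfun_gseq_aut.
- by move=> k g; apply: aut_inf_ext => x; rewrite !hfun_gseq_aut gseq_act_j.
- move=> h; have [K h_addr] := aut_inf_addr h.
  have h_inj : injective (hfun (sval h)) by case: (proj2_sig (sval h)) => /can_inj.
  exists K.+1, (decode h_inj h_addr); apply: aut_inf_ext => x.
  by rewrite hfun_gseq_aut /= sdp_act_decode.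
- move=> k a b eq_ab; exists 0; apply: gseq_act_faithful => x.
  by rewrite -!hfun_gseq_aut eq_ab.
Qed.
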